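(* Let $\theta$ be the parameters of an Elman RNN with $L$ layers such that every bias vector $\mathbf{b}^\ell$ ($0\le\ell\le L-1$) has all entries nonzero, and let $\mathcal{X}(\theta)$ be as defined below. Suppose $\theta\in\mathcal{X}(\theta)$ and $\theta'=\mathcal{P}(\theta)\in\mathcal{X}(\theta)$ where $\mathcal{P}=(\mathbf{I},\tilde{\mathbf{P}}^1\mathbf{D}^1,\dots,\tilde{\mathbf{P}}^{L-1}\mathbf{D}^{L-1},\mathbf{I})$ with each $\tilde{\mathbf{P}}^\ell$ a permutation matrix and each $\mathbf{D}^\ell$ a diagonal matrix with strictly positive diagonal entries. Then $\mathbf{D}^\ell=\mathbf{I}_{d_\ell}$ for all $0<\ell<L$.
   Context: Elman RNN: parameters $\theta=(\mathbf{W}_{\mathrm{rec}}^{\ell+1},\mathbf{W}_{\mathrm{ff}}^{\ell},\mathbf{b}^{\ell})_{0\le\ell\le L-1}$ with $\mathbf{W}_{\mathrm{ff}}^{\ell}\in\mathbb{R}^{d_{\ell+1}\times d_\ell}$, $\mathbf{W}_{\mathrm{rec}}^{\ell+1}\in\mathbb{R}^{d_{\ell+1}\times d_{\ell+1}}$, $\mathbf{b}^\ell\in\mathbb{R}^{d_{\ell+1}}$. An element $\mathcal{P}=(\mathbf{P}^0,\dots,\mathbf{P}^L)$ with $\mathbf{P}^0=\mathbf{I}$, $\mathbf{P}^L=\mathbf{I}$ and invertible $\mathbf{P}^\ell$ acts on $\theta$ by replacing, for each $1\le\ell\le L$, $(\mathbf{W}_{\mathrm{rec}}^{\ell},\mathbf{W}_{\mathrm{ff}}^{\ell-1},\mathbf{b}^{\ell-1})$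 with $(\mathbf{P}^\ell\mathbf{W}_{\mathrm{rec}}^{\ell}(\mathbf{P}^\ell)^{-1},\ \mathbf{P}^\ell\mathbf{W}_{\mathrm{ff}}^{\ell-1}(\mathbf{P}^{\ell-1})^{-1},\ \mathbf{P}^\ell\mathbf{b}^{\ell-1})$, giving $\mathcal{P}(\theta)$. $\mathcal{G}_{\mathrm{scaled}}$ is the set of such $\mathcal{P}$ with each $\mathbf{P}^\ell=\tilde{\mathbf{P}}^\ell\mathbf{D}^\ell$ ($1\le\ell\le L-1$), $\tilde{\mathbf{P}}^\ell$ a permutation matrix, $\mathbf{D}^\ell$ diagonal with strictly positive diagonal. Norm: $\|\theta\|_2^2=\|\mathbf{W}_{\mathrm{ff}}^{L-1}\|_F^2+\|\mathbf{b}^{L-1}\|^2+\sum_{0<\ell<L}(\|\mathbf{W}_{\mathrm{rec}}^{\ell}\|_F^2+\|\mathbf{W}_{\mathrm{ff}}^{\ell-1}\|_F^2+\|\mathbf{b}^{\ell-1}\|^2)$. $\mathcal{X}(\theta)$ is the set of $\theta'$ minimizing $\|\theta'\|_2$ subject to $\theta'=\mathcal{P}(\theta)$ for some $\mathcal{P}\in\mathcal{G}_{\mathrm{scaled}}$. *)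

From HB Require Import structures.
From mathcomp Require Import all_boot all_order all_algebra all_fingroup.
Set Implicit Arguments. Unset Strict Implicit. Unset Printing Implicit Defensive.
Import Order.TTheory GRing.Theory Num.Theory.
Local Open Scope ring_scope.

(* Index convention: for 0 <= l <= L-1,
     Wrec l : W_rec^{l+1}  in R^{d_{l+1} x d_{l+1}}
     Wff  l : W_ff^{l}     in R^{d_{l+1} x d_l}
     bias l : b^{l}        in R^{d_{l+1}} (column vector). *)
Record rnn_params (R : Type) (d : nat -> nat) := RNNParams {
  Wrec : forall l : nat, 'M[R]_(d l.+1);
  Wff  : forall l : nat, 'M[R]_(d l.+1, d l);
  bias : forall l : nat, 'cV[R]_(d l.+1)
}.

Definition params_eq (R : Type) (d : nat -> nat) (L : nat) (t1 t2 : rnn_params R d) :=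
  forall l, (l < L)%N ->
    [/\ Wrec t1 l = Wrec t2 l, Wff t1 l = Wff t2 l & bias t1 l = bias t2 l].

Definition frob2 (R : numDomainType) m n (A : 'M[R]_(m, n)) : R :=
  \sum_(i < m) \sum_(j < n) A i j ^+ 2.

Definition params_norm2 (R : numDomainType) (d : nat -> nat) (L : nat)
    (t : rnn_params R d) : R :=
  frob2 (Wff t L.-1) + frob2 (bias t L.-1)
  + \sum_(1 <= l < L) (frob2 (Wrec t l.-1) + frob2 (Wff t l.-1) + frob2 (bias t l.-1)).

Definition params_norm (R : rcfType) (d : nat -> nat) (L : nat) (t : rnn_params R d) : R :=
  Num.sqrt (params_norm2 L t).

(* An element of G_scaled is given by permutations ptilde l and diagonals
   dg l (row vectors) for 0 < l < L; P^0 = P^L = I. *)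
Definition Pmat (R : numDomainType) (d : nat -> nat) (L : nat)
    (ps : forall l, 'S_(d l)) (dg : forall l, 'rV[R]_(d l)) (l : nat) : 'M[R]_(d l) :=
  if (0 < l < L)%N then perm_mx (ps l) *m diag_mx (dg l) else 1%:M.

Definition in_Gscaled (R : numDomainType) (d : nat -> nat) (L : nat)
    (dg : forall l, 'rV[R]_(d l)) : Prop :=
  forall l, (0 < l < L)%N -> forall i, 0 < dg l 0 i.

Definition Pact (R : numFieldType) (d : nat -> nat) (L : nat)
    (ps : forall l, 'S_(d l)) (dg : forall l, 'rV[R]_(d l)) (t : rnn_params R d)
    : rnn_params R d :=
  RNNParams
    (fun l => Pmat L ps dg l.+1 *m Wrec t l *m invmx (Pmat L ps dg l.+1))
    (fun l => Pmat L ps dg l.+1 *m Wff t l *m invmx (Pmat L ps dg l))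
    (fun l => Pmat L ps dg l.+1 *m bias t l).

Definition in_X (R : rcfType) (d : nat -> nat) (L : nat) (t t' : rnn_params R d) : Prop :=
  (exists ps dg, in_Gscaled L dg /\ params_eq L t' (Pact L ps dg t)) /\
  (forall ps dg, in_Gscaled L dg -> params_norm L t' <= params_norm L (Pact L ps dg t)).

From HB Require Import structures.
From mathcomp Require Import all_boot all_order all_algebra all_fingroup.
From mathcomp Require Import ring lra zify.
Set Implicit Arguments. Unset Strict Implicit. Unset Printing Implicit Defensive.
Import Order.TTheory GRing.Theory Num.Theory.
Local Open Scope ring_scope.

(* The
   permutations do not change Frobenius norms, so the norm of P(theta) only
   depends on the rescaled parameters theta_D, whose entry (i, j) in a block
   from layer l to layer l' is (D^l'_i / D^l_j) * theta_ij (bias entries are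
   multiplied by D^l'_i).  Let sqrt D be the entrywise square root of D.  Every
   entry of theta_{sqrt D} is a geometric mean of the corresponding entries of
   theta and theta_D, so the entrywise identity b^2 + a^2 - 2ab = (b - a)^2 gives
      |theta_D|^2 + |theta|^2 - 2 |theta_{sqrt D}|^2 = |theta_D - theta|^2.
   If both theta and P(theta) have minimal norm in the orbit, the left-hand side
   is <= 0, hence theta_D = theta on every block counted by the norm.  On the
   biases this reads D^{l+1}_i b^l_i = b^l_i, and b^l_i != 0 forces D^{l+1}_i = 1.
   The file first treats squared Frobenius norms (geometric means, rescaling,
   invariance under permutations), then lifts these facts to parameter sets. *)

Lemma frob2_ge0 (R : realDomainType) m n (A : 'M[R]_(m, n)) : 0 <= frob2 A.
Proof. by apply: sumr_ge0 => i _; apply: sumr_ge0 => j _; apply: sqr_ge0. Qed.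

Lemma frob2_eq0 (R : realDomainType) m n (A : 'M[R]_(m, n)) : frob2 A = 0 -> A = 0.
Proof.
move=> A0; apply/matrixP => i j; rewrite mxE; apply/eqP; rewrite -sqrf_eq0.
have rowi0 : \sum_(j' < n) A i j' ^+ 2 = 0.
  apply: (psumr_eq0P _ A0) => // i' _.
  by apply: sumr_ge0 => j' _; apply: sqr_ge0.
by rewrite (psumr_eq0P _ rowi0) // => j' _; apply: sqr_ge0.
Qed.

Lemma frob2_row_perm (R : numDomainType) m n (s : 'S_m) (A : 'M[R]_(m, n)) :
  frob2 (row_perm s A) = frob2 A.
Proof.
rewrite /frob2 [RHS](reindex_inj (@perm_inj _ s)) /=.
by apply: eq_bigr => i _; apply: eq_bigr => j _; rewrite mxE.
Qed.

Lemma frob2_col_perm (R : numDomainType) m n (s : 'S_n) (A : 'M[R]_(m, n)) :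
  frob2 (col_perm s A) = frob2 A.
Proof.
rewrite /frob2; apply: eq_bigr => i _.
rewrite [RHS](reindex_inj (@perm_inj _ s)) /=.
by apply: eq_bigr => j _; rewrite mxE.
Qed.

Definition geomean_mx (R : ringType) m n (A B C : 'M[R]_(m, n)) : Prop :=
  forall i j, C i j ^+ 2 = A i j * B i j.

(* Polarization identity behind the proof: b^2 + a^2 - 2ab = (b - a)^2. *)
Lemma frob2_geomean (R : numDomainType) m n (A B C : 'M[R]_(m, n)) :
  geomean_mx A B C -> frob2 B + frob2 A - 2 * frob2 C = frob2 (B - A).
Proof.
move=> gC; rewrite /frob2 mulr_sumr -big_split -sumrB; apply: eq_bigr => i _.
rewrite mulr_sumr -big_split -sumrB; apply: eq_bigr => j _.
by rewrite gC !mxE /=; ring.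
Qed.

Definition scale_mx (R : fieldType) m n (u : 'I_m -> R) (v : 'I_n -> R)
    (A : 'M[R]_(m, n)) : 'M[R]_(m, n) :=
  \matrix_(i, j) (u i / v j * A i j).

Lemma scale_mx_geomean (R : fieldType) m n (u u2 : 'I_m -> R) (v v2 : 'I_n -> R)
    (A : 'M[R]_(m, n)) :
  (forall i, u2 i = u i ^+ 2) -> (forall j, v2 j = v j ^+ 2) ->
  geomean_mx A (scale_mx u2 v2 A) (scale_mx u v A).
Proof. by move=> hu hv i j; rewrite !mxE hu hv -exprVn; ring. Qed.

Section ScaledPermutations.
Variables (R : numFieldType) (d : nat -> nat) (L : nat).
Variables (ps : forall l, 'S_(d l)) (dg : forall l, 'rV[R]_(d l)).
Hypothesis hP : in_Gscaled L dg.

Definition dscale (l : nat) (i : 'I_(d l)) : R := if (0 < l < L)%N then dg l 0 i else 1.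
Arguments dscale : clear implicits.

Lemma dscale_gt0 l i : 0 < dscale l i.
Proof. by rewrite /dscale; case: ifP => // hl; apply: hP. Qed.

Let perm_of l : 'S_(d l) := if (0 < l < L)%N then ps l else 1%g.

Lemma Pmat_perm_diag l :
  Pmat L ps dg l = perm_mx (perm_of l) *m diag_mx (\row_i dscale l i).
Proof.
rewrite /Pmat /perm_of /dscale; case: ifP => _.
  by congr (_ *m diag_mx _); apply/matrixP => i j; rewrite !mxE (ord1 i).
rewrite perm_mx1 mul1mx -diag_const_mx; congr diag_mx.
by apply/matrixP => i j; rewrite !mxE.
Qed.

Lemma invmx_Pmat l :
  invmx (Pmat L ps dg l) = diag_mx (\row_i (dscale l i)^-1) *m perm_mx (perm_of l)^-1.
Proof.
rewrite Pmat_perm_diag; set P := _ *m _; set Q := _ *m _.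
have PQ1 : P *m Q = 1%:M.
  rewrite /P /Q mulmxA -[perm_mx _ *m _ *m _]mulmxA mulmx_diag.
  have -> : \row_j ((\row_i dscale l i) 0 j * (\row_i (dscale l i)^-1) 0 j)
      = const_mx 1.
    by apply/matrixP => i j; rewrite !mxE divff // lt0r_neq0 // dscale_gt0.
  by rewrite diag_const_mx mulmx1 -perm_mxM mulgV perm_mx1.
rewrite -[invmx P]mulmx1 -PQ1 mulmxA mulVmx ?mul1mx //.
by case: (mulmx1_unit PQ1).
Qed.

(* Conjugating a block by scaled permutations only rescales it, up to a
   permutation of rows and columns, which is invisible to the norm. *)
Lemma frob2_conj_Pmat l' l (A : 'M[R]_(d l', d l)) :
  frob2 (Pmat L ps dg l' *m A *m invmx (Pmat L ps dg l))
  = frob2 (scale_mx (dscale l') (dscale l) A).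
Proof.
rewrite invmx_Pmat Pmat_perm_diag; set E' := diag_mx _; set Ei := diag_mx _.
have -> : perm_mx (perm_of l') *m E' *m A *m (Ei *m perm_mx (perm_of l)^-1)
    = col_perm (perm_of l) (row_perm (perm_of l') (E' *m A *m Ei)).
  by rewrite col_permE row_permE !mulmxA.
rewrite frob2_col_perm frob2_row_perm mul_mx_diag mul_diag_mx.
congr frob2; apply/matrixP => i j; by rewrite !mxE mulrAC.
Qed.

Lemma frob2_Pmat_bias l' (b : 'cV[R]_(d l')) :
  frob2 (Pmat L ps dg l' *m b) = frob2 (scale_mx (dscale l') (fun _ => 1) b).
Proof.
rewrite Pmat_perm_diag -mulmxA -row_permE frob2_row_perm mul_diag_mx.
by congr frob2; apply/matrixP => i j; rewrite !mxE divr1.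
Qed.

End ScaledPermutations.
Arguments dscale {R d} L dg l i.

Definition rescale (R : fieldType) (d : nat -> nat) (c : forall l, 'I_(d l) -> R)
    (t : rnn_params R d) : rnn_params R d :=
  RNNParams (fun l => scale_mx (c l.+1) (c l.+1) (Wrec t l))
            (fun l => scale_mx (c l.+1) (c l) (Wff t l))
            (fun l => scale_mx (c l.+1) (fun _ => 1) (bias t l)).

Definition params_sub (R : ringType) (d : nat -> nat) (t1 t2 : rnn_params R d) :=
  RNNParams (fun l => Wrec t1 l - Wrec t2 l) (fun l => Wff t1 l - Wff t2 l)
            (fun l => bias t1 l - bias t2 l).

Definition geomean (R : ringType) (d : nat -> nat) (t1 t2 t3 : rnn_params R d) :=
  forall l, [/\ geomean_mx (Wrec t1 l) (Wrec t2 l) (Wrec t3 l),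
               geomean_mx (Wff t1 l) (Wff t2 l) (Wff t3 l)
             & geomean_mx (bias t1 l) (bias t2 l) (bias t3 l)].

Lemma rescale_geomean (R : fieldType) d (c c2 : forall l, 'I_(d l) -> R)
    (t : rnn_params R d) :
  (forall l i, c2 l i = c l i ^+ 2) -> geomean t (rescale c2 t) (rescale c t).
Proof.
move=> hc l; split; apply: scale_mx_geomean => i; by rewrite ?hc ?expr1n.
Qed.

Lemma norm2_Pact (R : numFieldType) d L ps (dg : forall l, 'rV[R]_(d l)) t :
  in_Gscaled L dg ->
  params_norm2 L (Pact L ps dg t) = params_norm2 L (rescale (dscale L dg) t).
Proof.
move=> hP; rewrite /params_norm2 /= !frob2_conj_Pmat // !frob2_Pmat_bias.
by congr (_ + _); apply: eq_bigr => l _; rewrite !frob2_conj_Pmat // !frob2_Pmat_bias.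
Qed.

Lemma norm2_geomean (R : numDomainType) d L (t1 t2 t3 : rnn_params R d) :
  geomean t1 t2 t3 ->
  params_norm2 L t2 + params_norm2 L t1 - 2 * params_norm2 L t3
  = params_norm2 L (params_sub t2 t1).
Proof.
move=> g; rewrite /params_norm2 /=.
have [_ gWff gb] := g L.-1.
rewrite -(frob2_geomean gWff) -(frob2_geomean gb).
set S := fun t : rnn_params R d => \sum_(1 <= l < L)
  (frob2 (Wrec t l.-1) + frob2 (Wff t l.-1) + frob2 (bias t l.-1)).
have -> : \sum_(1 <= l < L) (frob2 (Wrec t2 l.-1 - Wrec t1 l.-1)
    + frob2 (Wff t2 l.-1 - Wff t1 l.-1) + frob2 (bias t2 l.-1 - bias t1 l.-1))
    = S t2 + S t1 - 2 * S t3.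
  rewrite /S mulr_sumr -big_split -sumrB /=; apply: eq_bigr => l _.
  have [gr gf gb'] := g l.-1.
  rewrite -(frob2_geomean gr) -(frob2_geomean gf) -(frob2_geomean gb'); ring.
rewrite /S; ring.
Qed.

Lemma norm2_ge0 (R : realDomainType) d L (t : rnn_params R d) : 0 <= params_norm2 L t.
Proof.
rewrite /params_norm2 !addr_ge0 ?frob2_ge0 //.
by apply: sumr_ge0 => l _; rewrite !addr_ge0 ?frob2_ge0.
Qed.

Lemma frob2_bias_le_norm2 (R : realDomainType) d L (t : rnn_params R d) l :
  (l < L)%N -> frob2 (bias t l) <= params_norm2 L t.
Proof.
move=> lL; rewrite /params_norm2.
have [lL1 | llast] := ltnP l.+1 L.
  rewrite (bigD1_seq l.+1) ?mem_index_iota ?iota_uniq //=.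
  set rest := \sum_(_ <- _ | _) _.
  have rest_ge0 : 0 <= rest by apply: sumr_ge0 => k _; rewrite !addr_ge0 ?frob2_ge0.
  have := frob2_ge0 (Wrec t l); have := frob2_ge0 (Wff t l).
  have := frob2_ge0 (Wff t L.-1); have := frob2_ge0 (bias t L.-1); lra.
have -> : l = L.-1 by lia.
have sum_ge0 : 0 <= \sum_(1 <= k < L)
    (frob2 (Wrec t k.-1) + frob2 (Wff t k.-1) + frob2 (bias t k.-1)).
  by apply: sumr_ge0 => k _; rewrite !addr_ge0 ?frob2_ge0.
have := frob2_ge0 (Wff t L.-1); lra.
Qed.

Lemma in_X_norm2_le (R : rcfType) d L (t t' : rnn_params R d) ps
    (dg : forall l, 'rV[R]_(d l)) :
  in_X L t t' -> in_Gscaled L dg ->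
  params_norm2 L t' <= params_norm2 L (Pact L ps dg t).
Proof. by move=> [_ hmin] hP; have := hmin ps dg hP; rewrite ler_sqrt ?norm2_ge0. Qed.

Theorem mainTheorem5 (R : rcfType) (d : nat -> nat) (L : nat)
    (theta : rnn_params R d)
    (hb : forall l, (l < L)%N -> forall i, bias theta l i 0 != 0)
    (ps : forall l, 'S_(d l)) (dg : forall l, 'rV[R]_(d l))
    (hP : in_Gscaled L dg)
    (hX : in_X L theta theta)
    (hX' : in_X L theta (Pact L ps dg theta)) :
  forall l, (0 < l < L)%N -> diag_mx (dg l) = 1%:M.
Proof.
move=> [|k] // hkL; have kL : (k < L)%N by case/andP: hkL => _ /ltnW.
pose sdg l := map_mx (@Num.sqrt R) (dg l).
have hPs : in_Gscaled L sdg by move=> l hl i; rewrite mxE sqrtr_gt0 hP.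
have sq_sdg l i : dscale L dg l i = dscale L sdg l i ^+ 2.
  by rewrite /dscale; case: ifP => hl; rewrite ?expr1n // mxE sqr_sqrtr ?ltW ?hP.
have gap := norm2_geomean L (rescale_geomean theta sq_sdg).
have le1 := in_X_norm2_le ps hX hPs; have le2 := in_X_norm2_le ps hX' hPs.
rewrite !norm2_Pact // in le1 le2.
have diff0 : params_norm2 L (params_sub (rescale (dscale L dg) theta) theta) = 0.
  by apply/le_anti; rewrite norm2_ge0 -gap andbT; lra.
have bias0 : bias (params_sub (rescale (dscale L dg) theta) theta) k = 0.
  apply: frob2_eq0; apply/le_anti; rewrite frob2_ge0 andbT -diff0.
  exact: frob2_bias_le_norm2.
rewrite -diag_const_mx; congr diag_mx; apply/rowP => i; rewrite mxE.
have /matrixP/(_ i 0) := bias0; rewrite !mxE /dscale hkL divr1 => /eqP.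
rewrite -{2}[bias theta k i 0]mul1r -mulrBl mulf_eq0 subr_eq0 (negbTE (hb k kL i)).
by rewrite orbF => /eqP.
Qed.
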